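(* Let $p$ be prime and $H\le\mathrm{S}_n$ be in $\mathfrak{InP}(\mathrm{C}_p)$, let $\gamma$ be as in the context and $M$ a generator matrix of $\gamma(H)$. Let $I,J\subseteq\{1,\dots,k\}$ be such that there exists $\nu\in N_{\mathrm{S}_n}(H)$ with $\Omega_I^\nu=\Omega_J$. Then the rank of $M_{*,I}$ equals the rank of $M_{*,J}$. Hence the columns of $M_{*,I}$ are minimally linearly dependent if and only if the columns of $M_{*,J}$ are minimally linearly dependent.
   Context: $H\le\mathrm{S}_{n}$, $n=pk$, has orbits $\Omega_1,\dots,\Omega_k$ of size $p$ with each $G_i:=H|_{\Omega_i}$ cyclic of order $p$; $G=G_1\times\dots\times G_k$, $g_i$ a generator of $G_i$, and $\gamma:G\to\mathbb{F}_p^k$ is $\gamma(g_1^{r_1}\cdots g_k^{r_k})=(r_1,\dots,r_k)$. A generator matrix has rows forming a basis of $\gamma(H)$. For $I\subseteq\{1,\dots,k\}$, $\Omega_I=\bigcup_{i\in I}\Omega_i$ and $M_{*,I}$ is the submatrix of $M$ formed by the columns indexed by $I$. A set of vectors is minimally linearly dependent if it is linearly dependent but no proper subset is. *)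

From HB Require Import structures.
From mathcomp Require Import all_boot all_order all_fingroup all_algebra all_solvable.
Set Implicit Arguments. Unset Strict Implicit. Unset Printing Implicit Defensive.
Import GRing.Theory.
Local Open Scope ring_scope.

Definition Omega (n k : nat) (orb : 'I_n -> 'I_k) (i : 'I_k) : {set 'I_n} :=
  [set x | orb x == i].

Definition OmegaI (n k : nat) (orb : 'I_n -> 'I_k) (I : {set 'I_k}) : {set 'I_n} :=
  [set x | orb x \in I].

(* G_i := H|_{Omega_i}, realised as permutations of 'I_n supported on Omega_i *)
Definition Gi (n k : nat) (orb : 'I_n -> 'I_k) (H : {group {perm 'I_n}})
  (i : 'I_k) : {set {perm 'I_n}} :=
  (restr_perm (Omega orb i) @* H)%g.

Definition InPCp (p n k : nat) (orb : 'I_n -> 'I_k) (H : {group {perm 'I_n}}) :=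
  [/\ n = (p * k)%N,
      (forall x, orbit 'P H x = Omega orb (orb x)),
      (forall i, #|Omega orb i| = p) &
      (forall i, cyclic (Gi orb H i) /\ #|Gi orb H i| = p)].

Definition gammaH (p n k : nat) (orb : 'I_n -> 'I_k) (H : {group {perm 'I_n}})
  (g : 'I_k -> {perm 'I_n}) : {set 'rV['F_p]_k} :=
  [set v : 'rV['F_p]_k | [exists h in H,
      [forall i, restr_perm (Omega orb i) h == (g i ^+ (nat_of_ord (v 0 i)))%g]]].

Definition generator_matrix (p k r : nat) (Gam : {set 'rV['F_p]_k})
  (M : 'M['F_p]_(r, k)) :=
  row_free M /\ (forall v : 'rV['F_p]_k, (v <= M)%MS <-> v \in Gam).

(* M_{*,I}: the submatrix formed by the columns indexed by I (in increasing order) *)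
Definition colsI (F : Type) (r k : nat) (M : 'M[F]_(r, k)) (I : {set 'I_k}) :
  'M[F]_(r, #|I|) := colsub (fun j : 'I_#|I| => enum_val j) M.

Definition cols_free (F : fieldType) (r m : nat) (A : 'M[F]_(r, m)) := row_free A^T.

Definition cols_min_dep (F : fieldType) (r m : nat) (A : 'M[F]_(r, m)) :=
  ~ cols_free A /\
  (forall S : {set 'I_m}, S \proper [set: 'I_m] -> cols_free (colsI A S)).

From HB Require Import structures.
From mathcomp Require Import all_boot all_order all_fingroup all_algebra all_solvable.
Set Implicit Arguments. Unset Strict Implicit. Unset Printing Implicit Defensive.
Import GRing.Theory.
Local Open Scope ring_scope.

(* Since nu normalises H it permutes the H-orbits, orb (nu^-1 x) = tau (orb x)
   for a permutation tau of the orbit indices, and conjugation by nu maps the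
   generator g_(tau j) of G_(tau j) to a nontrivial power g_j^(b_j).  Hence
   gamma(H) is stable under right multiplication by the invertible monomial
   matrix P with P_(tau j, j) = b_j, so M *m P and M have the same row space.
   The columns of M *m P indexed by T are nonzero multiples of the columns of M
   indexed by tau(T), so the rank of the columns of M indexed by T is invariant
   under T |-> tau(T).  As tau(J) = I this gives the rank equality, and minimal
   dependence, a condition on the ranks of all column subsets, transfers too. *)

Lemma imset_permKV (T : finType) (s : {perm T}) (A : {set T}) :
  s @: ((s^-1)%g @: A) = A.
Proof. by rewrite -imset_comp (eq_imset _ (permKV s)) imset_id. Qed.

Lemma imset_permK (T : finType) (s : {perm T}) (A : {set T}) :
  (s^-1)%g @: (s @: A) = A.
Proof. by rewrite -{2}[s]invgK imset_permKV. Qed.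

Lemma mem_imset_perm (T : finType) (s : {perm T}) (A : {set T}) x :
  (x \in s @: A) = ((s^-1)%g x \in A).
Proof. by rewrite -preim_permV inE. Qed.

Section ColumnSubmatrices.

Variable F : fieldType.

Lemma mxrank_le_col_multiples r a b (A : 'M[F]_(r, a)) (B : 'M[F]_(r, b)) :
  (forall j, exists j' s, forall i, A i j = s * B i j') -> (\rank A <= \rank B)%N.
Proof.
move=> Amul; rewrite -mxrank_tr -[\rank B]mxrank_tr; apply: mxrankS.
apply/row_subP => j; have [j' [s Aj]] := Amul j.
have -> : row j A^T = s *: row j' B^T by apply/rowP => i; rewrite !mxE Aj.
by rewrite scalemx_sub // row_sub.
Qed.

Lemma mxrank_colsI_le_scaled r k (A B : 'M[F]_(r, k)) (tau : {perm 'I_k})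
    (s : 'I_k -> F) (T : {set 'I_k}) :
  (forall i j, A i j = s j * B i (tau j)) ->
  (\rank (colsI A T) <= \rank (colsI B (tau @: T)))%N.
Proof.
move=> AsB; apply: mxrank_le_col_multiples => j.
have tauT : tau (enum_val j) \in tau @: T by rewrite imset_f ?enum_valP.
exists (enum_rank_in tauT (tau (enum_val j))), (s (enum_val j)) => i.
by rewrite !mxE enum_rankK_in.
Qed.

Lemma colsI_mul r r' k (D : 'M[F]_(r, r')) (B : 'M[F]_(r', k)) (T : {set 'I_k}) :
  colsI (D *m B) T = D *m colsI B T.
Proof.
by apply/matrixP => i j; rewrite !mxE; apply: eq_bigr => l _; rewrite !mxE.
Qed.

Lemma mxrank_colsI_leS r r' k (A : 'M[F]_(r, k)) (B : 'M[F]_(r', k)) T :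
  (A <= B)%MS -> (\rank (colsI A T) <= \rank (colsI B T))%N.
Proof. by case/submxP=> D ->; rewrite colsI_mul mxrankM_maxr. Qed.

Lemma eqmx_mxrank_colsI r r' k (A : 'M[F]_(r, k)) (B : 'M[F]_(r', k)) T :
  (A == B)%MS -> \rank (colsI A T) = \rank (colsI B T).
Proof. by case/andP=> AB BA; apply/eqP; rewrite eqn_leq !mxrank_colsI_leS. Qed.

Lemma mxrank_colsI_colsI r k (A : 'M[F]_(r, k)) (I : {set 'I_k}) (S : {set 'I_#|I|}) :
  \rank (colsI (colsI A I) S) = \rank (colsI A (enum_val @: S)).
Proof.
apply/eqP; rewrite eqn_leq; apply/andP; split; apply: mxrank_le_col_multiples => j.
- have Sj : enum_val (enum_val j) \in enum_val @: S by rewrite imset_f ?enum_valP.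
  exists (enum_rank_in Sj (enum_val (enum_val j))), 1 => i.
  by rewrite !mxE enum_rankK_in // mul1r.
- case/imsetP: (enum_valP j) => x Sx jx.
  exists (enum_rank_in Sx x), 1 => i.
  by rewrite !mxE jx enum_rankK_in // mul1r.
Qed.

Lemma cols_freeE r m (A : 'M[F]_(r, m)) : cols_free A = (\rank A == m).
Proof. by rewrite /cols_free /row_free mxrank_tr. Qed.

Definition min_dep_colset r k (A : 'M[F]_(r, k)) (I : {set 'I_k}) :=
  \rank (colsI A I) != #|I| /\
  forall T : {set 'I_k}, T \proper I -> \rank (colsI A T) = #|T|.

Lemma cols_min_dep_colsI r k (A : 'M[F]_(r, k)) (I : {set 'I_k}) :
  cols_min_dep (colsI A I) <-> min_dep_colset A I.
Proof.
rewrite /cols_min_dep /min_dep_colset cols_freeE.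
split=> [[/negP dep minS] | [/negP dep minT]]; split=> //.
- move=> T ltTI; pose S := [set t | enum_val t \in T] : {set 'I_#|I|}.
  have defT : enum_val @: S = T.
    apply/setP => x; apply/imsetP/idP => [[t] | Tx]; first by rewrite inE => ? ->.
    have Ix : x \in I := subsetP (proper_sub ltTI) x Tx.
    by exists (enum_rank_in Ix x); rewrite ?inE enum_rankK_in.
  have cardS : #|S| = #|T| by rewrite -defT (card_imset _ (@enum_val_inj _ I)).
  apply/eqP; rewrite -defT -mxrank_colsI_colsI (card_imset _ (@enum_val_inj _ I)).
  rewrite -cols_freeE; apply: minS.
  by rewrite properEcard subsetT cardsT card_ord cardS proper_card.
- move=> S ltST; rewrite cols_freeE mxrank_colsI_colsI minT.
    by rewrite (card_imset _ (@enum_val_inj _ I)).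
  rewrite properEcard (card_imset _ (@enum_val_inj _ I)).
  have := proper_card ltST; rewrite cardsT card_ord => -> /[!andbT].
  by apply/subsetP => _ /imsetP[x _ ->]; apply: enum_valP.
Qed.

Lemma min_dep_colset_perm r k (A : 'M[F]_(r, k)) (tau : {perm 'I_k}) :
  (forall T : {set 'I_k}, \rank (colsI A (tau @: T)) = \rank (colsI A T)) ->
  forall J : {set 'I_k}, min_dep_colset A (tau @: J) <-> min_dep_colset A J.
Proof.
suff transport (s : {perm 'I_k}) :
    (forall T : {set 'I_k}, \rank (colsI A (s @: T)) = \rank (colsI A T)) ->
    forall J : {set 'I_k}, min_dep_colset A J -> min_dep_colset A (s @: J).
  move=> tauA J; split; last exact: transport.
  have tauVA (T : {set 'I_k}) : \rank (colsI A ((tau^-1)%g @: T)) = \rank (colsI A T).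
    by rewrite -[in RHS](imset_permKV tau T) tauA.
  by move/(transport _ tauVA); rewrite imset_permK.
move=> sA J [dep minT]; split; first by rewrite sA card_imset //; apply: perm_inj.
move=> T ltTsJ; rewrite -(imset_permKV s T) sA [RHS]card_imset; last exact: perm_inj.
by rewrite minT // -(imset_permK s J) imset_proper //; apply: in2W; apply: perm_inj.
Qed.

Definition monomial_mx k (tau : {perm 'I_k}) (b : 'I_k -> F) : 'M[F]_k :=
  \matrix_(i, j) (if i == tau j then b j else 0).

Lemma mulmx_monomial r k (M : 'M[F]_(r, k)) (tau : {perm 'I_k}) (b : 'I_k -> F) i j :
  (M *m monomial_mx tau b) i j = b j * M i (tau j).
Proof.
rewrite !mxE (bigD1 (tau j)) //= !mxE eqxx big1 ?addr0 1?mulrC // => l ne_l.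
by rewrite !mxE (negbTE ne_l) mulr0.
Qed.

Lemma monomial_mx_free k (tau : {perm 'I_k}) (b : 'I_k -> F) :
  (forall j, b j != 0) -> row_free (monomial_mx tau b).
Proof.
move=> b_nz; apply/row_freeP.
exists (monomial_mx (tau^-1)%g (fun i => (b (tau^-1 i)%g)^-1)).
apply/matrixP => i j; rewrite mulmx_monomial !mxE permKV eq_sym.
by case: eqP => [->|_]; rewrite ?mulr0 // mulVf.
Qed.

Lemma mxrank_colsI_monomial_stable r k (M : 'M[F]_(r, k)) (tau : {perm 'I_k})
    (b : 'I_k -> F) :
  (forall j, b j != 0) -> (M *m monomial_mx tau b <= M)%MS ->
  forall T : {set 'I_k}, \rank (colsI M (tau @: T)) = \rank (colsI M T).
Proof.
move=> b_nz MP_M T; set MP := M *m monomial_mx tau b in MP_M *.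
have MP_eq : (MP == M)%MS.
  by have [_ <-] := mxrank_leqif_eq MP_M; rewrite mxrankMfree ?monomial_mx_free.
rewrite -(eqmx_mxrank_colsI T MP_eq); apply/eqP; rewrite eqn_leq; apply/andP; split.
- have := @mxrank_colsI_le_scaled _ _ M MP (tau^-1)%g
    (fun j => (b (tau^-1 j)%g)^-1) (tau @: T).
  rewrite imset_permK; apply=> i j.
  by rewrite mulmx_monomial permKV mulrA mulVf ?mul1r.
- exact/mxrank_colsI_le_scaled/mulmx_monomial.
Qed.

End ColumnSubmatrices.

Section OrbitPartition.

Variables (n k : nat) (orb : 'I_n -> 'I_k).

Lemma OmegaI_perm (rep : 'I_k -> 'I_n) (nu : {perm 'I_n}) (tau : {perm 'I_k})
    (I J : {set 'I_k}) :
  cancel rep orb -> (forall x, orb ((nu^-1)%g x) = tau (orb x)) ->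
  nu @: OmegaI orb I = OmegaI orb J -> tau @: J = I.
Proof.
move=> repK nu_tau nuIJ; apply/setP => y.
have memJ j : (j \in J) = (rep j \in OmegaI orb J) by rewrite inE repK.
by rewrite mem_imset_perm memJ -nuIJ mem_imset_perm inE nu_tau repK permKV.
Qed.

Variable H : {group {perm 'I_n}}.
Hypothesis orbitH : forall x, orbit 'P H x = Omega orb (orb x).

Lemma mem_orbit_orb x y : (y \in orbit 'P H x) = (orb y == orb x).
Proof. by rewrite orbitH inE. Qed.

Lemma orb_act h x : h \in H -> orb (h x) = orb x.
Proof. by move=> Hh; apply/eqP; rewrite -mem_orbit_orb (mem_orbit 'P x Hh). Qed.

Lemma astabs_Omega h i : h \in H -> h \in 'N(Omega orb i | 'P)%g.
Proof. by move=> Hh; apply/astabsP => x; rewrite !inE /aperm orb_act. Qed.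

Lemma restr_perm_OmegaE h i x :
  h \in H -> restr_perm (Omega orb i) h x = if orb x == i then h x else x.
Proof.
move=> Hh; case: ifP => [xi | /negbT xi].
  by rewrite restr_permE ?astabs_Omega ?inE.
by rewrite (out_perm (restr_perm_on _ _)) ?inE.
Qed.

Lemma orb_norm_act nu x y :
  nu \in 'N(H)%g -> orb x = orb y -> orb (nu x) = orb (nu y).
Proof.
move=> nuN /eqP; rewrite eq_sym -mem_orbit_orb => /orbitP[h Hh <-].
apply/eqP; rewrite eq_sym -mem_orbit_orb; apply/orbitP; exists (h ^ nu)%g.
  by rewrite memJ_norm.
by rewrite /= /aperm conjgE !permM permK.
Qed.

Lemma norm_orb_perm (rep : 'I_k -> 'I_n) nu :
  cancel rep orb -> nu \in 'N(H)%g ->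
  exists tau : {perm 'I_k}, forall x, orb ((nu^-1)%g x) = tau (orb x).
Proof.
move=> repK nuN; have nuVN : (nu^-1)%g \in 'N(H)%g by rewrite groupV.
pose t i := orb ((nu^-1)%g (rep i)).
have t_inj : injective t.
  by move=> i j /(orb_norm_act nuN); rewrite !permKV !repK.
exists (perm t_inj) => x; rewrite [perm t_inj _]permE.
by apply: (orb_norm_act nuVN); rewrite repK.
Qed.

Lemma restr_perm_conj (nu : {perm 'I_n}) (tau : {perm 'I_k}) h j :
  (forall x, orb ((nu^-1)%g x) = tau (orb x)) -> nu \in 'N(H)%g -> h \in H ->
  restr_perm (Omega orb j) (h ^ nu)%g = (restr_perm (Omega orb (tau j)) h ^ nu)%g.
Proof.
move=> nu_tau nuN Hh; apply/permP => x.
rewrite restr_perm_OmegaE ?memJ_norm // conjgE !permM restr_perm_OmegaE //.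
by rewrite nu_tau (inj_eq perm_inj); case: eqP => // _; rewrite permKV.
Qed.

End OrbitPartition.

Section GeneratorCoordinates.

Variables (p n k : nat) (orb : 'I_n -> 'I_k) (H : {group {perm 'I_n}}).
Variable g : 'I_k -> {perm 'I_n}.
Hypotheses (p_pr : prime p) (orbitH : forall x, orbit 'P H x = Omega orb (orb x)).
Hypothesis Gi_g : forall i, Gi orb H i = <[g i]>%g.
Hypothesis card_Gi : forall i, #|Gi orb H i| = p.

Lemma order_generator i : #[g i]%g = p.
Proof. by rewrite /order -Gi_g card_Gi. Qed.

Lemma expg_Fp_nat i c : (g i ^+ (c%:R : 'F_p))%g = (g i ^+ c)%g.
Proof. by rewrite val_Fp_nat // -(order_generator i) expg_mod_order. Qed.

Variables (nu : {perm 'I_n}) (tau : {perm 'I_k}).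
Hypotheses (nuN : nu \in 'N(H)%g) (nu_tau : forall x, orb ((nu^-1)%g x) = tau (orb x)).

Lemma conj_generator j : exists2 c : 'F_p, c != 0 & (g (tau j) ^ nu)%g = (g j ^+ c)%g.
Proof.
have : g (tau j) \in Gi orb H (tau j) by rewrite Gi_g cycle_id.
rewrite /Gi; case/morphimP => h _ Hh gtau.
have Hh_nu : (h ^ nu)%g \in H by rewrite memJ_norm.
have : restr_perm (Omega orb j) (h ^ nu)%g \in <[g j]>%g.
  by rewrite -Gi_g /Gi mem_morphim // (astabs_Omega orbitH).
rewrite (restr_perm_conj orbitH j nu_tau nuN Hh) -gtau => /cycleP[c conj_c].
exists c%:R; last by rewrite expg_Fp_nat.
apply: contraTneq (prime_gt1 p_pr) => c0.
have : (g (tau j) ^ nu)%g = 1%g by rewrite conj_c -expg_Fp_nat c0 expg0.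
by move/eqP; rewrite conjg_eq1 -(order_generator (tau j)) => /eqP->; rewrite order1.
Qed.

Lemma gammaH_mulmx_monomial (b : 'I_k -> 'F_p) v :
  (forall j, (g (tau j) ^ nu)%g = (g j ^+ b j)%g) ->
  v \in gammaH p orb H g -> v *m monomial_mx tau b \in gammaH p orb H g.
Proof.
move=> conj_b; rewrite !inE => /existsP[h /andP[Hh /forallP v_h]].
apply/existsP; exists (h ^ nu)%g; rewrite memJ_norm // Hh; apply/forallP => j.
rewrite (restr_perm_conj orbitH j nu_tau nuN Hh) (eqP (v_h (tau j))) conjXg conj_b.
have -> : (v *m monomial_mx tau b) 0%R j = (b j * v 0%R (tau j))%N%:R.
  by rewrite mulmx_monomial natrM !natr_Zp.
by rewrite expg_Fp_nat expgM.
Qed.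

End GeneratorCoordinates.

Theorem lemma5p3 (p n k r : nat) (orb : 'I_n -> 'I_k)
  (H : {group {perm 'I_n}}) (g : 'I_k -> {perm 'I_n}) (M : 'M['F_p]_(r, k))
  (I J : {set 'I_k}) :
  prime p ->
  InPCp p orb H ->
  (forall i, Gi orb H i = <[g i]>%g) ->
  generator_matrix (gammaH p orb H g) M ->
  (exists2 nu : {perm 'I_n}, nu \in 'N(H)%g &
     [set nu x | x in OmegaI orb I] = OmegaI orb J) ->
  \rank (colsI M I) = \rank (colsI M J) /\
  (cols_min_dep (colsI M I) <-> cols_min_dep (colsI M J)).
Proof.
move=> p_pr [_ orbitH card_Omega Gi_p] Gi_g [_ M_gamma] [nu nuN nuIJ].
have card_Gi i : #|Gi orb H i| = p by case: (Gi_p i).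
have /fin_all_exists[rep repK] : forall i, exists x, orb x = i.
  move=> i; have /card_gt0P[x] : (0 < #|Omega orb i|)%N by rewrite card_Omega prime_gt0.
  by rewrite inE => /eqP; exists x.
have [tau nu_tau] := norm_orb_perm orbitH repK nuN.
have [b b_nz conj_b] :=
  fin_all_exists2 (conj_generator p_pr orbitH Gi_g card_Gi nuN nu_tau).
have MP_M : (M *m monomial_mx tau b <= M)%MS.
  apply/row_subP => i; rewrite row_mul; apply/M_gamma.
  apply: (gammaH_mulmx_monomial p_pr orbitH Gi_g card_Gi nuN nu_tau conj_b).
  exact/M_gamma/row_sub.
have rank_tau := mxrank_colsI_monomial_stable b_nz MP_M.
rewrite -(OmegaI_perm repK nu_tau nuIJ); split; first exact: rank_tau.
apply: iff_trans (cols_min_dep_colsI _ _) _.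
apply: iff_trans (min_dep_colset_perm rank_tau J) _.
exact: iff_sym (cols_min_dep_colsI _ _).
Qed.
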